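(* For every loop $\bar p$ based at $a\in K$, $\chi_{\bar p}^*\chi_{\bar p}=Q_{\bar p}\otimes I$ on $H_a\otimes l^2(S_a)$ (and zero on the other summands of $\mathcal H$), where $Q_{\bar p}$ is the orthogonal projection of $H_a$ onto the domain $H_{\bar p^{-1}*\bar p}=H_{\bar p}$.
   Context: $K$ is a partially ordered set. Elementary paths on $K$: for $b\le a$ the formal symbol $(b,a)$ and for $b\ge a$ the formal symbol $\overline{(b,a)}$; both have starting point $\partial_1=a$ and ending point $\partial_0=b$; $(a,a)=\overline{(a,a)}=:i_a$ is the trivial path. The reverse of $(b,a)$ is $\overline{(a,b)}$ and the reverse of $\overline{(b,a)}$ is $(a,b)$. $\overline S$ is the set of finite sequences $\bar p=s_n*\cdots*s_1$ of elementary paths with $\partial_0 s_{i-1}=\partial_1 s_i$; $\partial_1\bar p=\partial_1 s_1$, $\partial_0\bar p=\partial_0 s_n$, $\bar p^{-1}=s_1^{-1}*\cdots*s_n^{-1}$, and the concatenation $\bar p*\bar q$ is defined when $\partial_1\bar p=\partial_0\bar q$. The equivalence $\sim$ on $\overline S$ is the smallest equivalence relation compatible with concatenation such that for all $a\le b\le c$: $(a,b)*(b,c)\sim(a,c)$, $\overline{(c,b)}*\overline{(b,a)}\sim\overline{(c,a)}$, $(a,b)*\overline{(b,a)}\sim i_a$, $\overline{(b,a)}*(a,b)\sim i_b$. Equivalence classes $p=[\bar p]$ are called paths. $S_a$ denotes the set of paths $p$ with $\partial_0p=a$. A loop based at $a$ is $\bar p\in\overline S$ with $\partial_0\bar p=\partial_1\bar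 p=a$. For each $a\in K$, $H_a$ is a Hilbert space with orthonormal basis $\{e^a_n\}_{n\ge1}$; for $a\le b$, $\gamma_{ba}:H_a\to H_b$ is an isometry mapping each basis vector $e^a_n$ to a basis vector of $\{e^b_m\}$, with $\gamma_{aa}=\mathrm{id}$ and $\gamma_{ca}=\gamma_{cb}\gamma_{ba}$ for $a\le b\le c$. $l^2(S_a)$ is the Hilbert space with orthonormal basis $\{e_p\}_{p\in S_a}$, and $\mathcal H=\bigoplus_{a\in K}H_a\otimes l^2(S_a)$. For $a\le b$, $\chi_a^b\in B(\mathcal H)$ vanishes on all summands other than $H_a\otimes l^2(S_a)$ and satisfies $\chi_a^b(h\otimes e_p)=\gamma_{ba}(h)\otimes e_{[\overline{(b,a)}*\bar p]}$ for $h\in H_a$, $p\in S_a$, $\bar p\in p$; $\chi_a^{b*}$ is its adjoint. For an elementary path put $\chi_{\overline{(b,a)}}=\chi_a^b$ ($a\le b$) and $\chi_{(b,a)}=\chi_b^{a*}$ ($b\le a$), and for $\bar p=s_n*\cdots*s_1\in\overline S$ put $\chi_{\bar p}=\chi_{s_n}\cdots\chi_{s_1}$. The domain $H_{\bar p}$ of $\bar p$ is the closed subspace of $H_{\partial_1\bar p}$ consisting of the vectors $h$ with $\|\chi_{\bar p}(h\otimes e_s)\|=\|h\|$ for all $s\in S_{\partial_1\bar p}$. *)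

From Stdlib Require Import Reals List ClassicalEpsilon.
Import ListNotations.
Open Scope R_scope.

Definition C := (R * R)%type.
Definition C0 : C := (0, 0).
Definition Cnormsq (z : C) : R := fst z * fst z + snd z * snd z.
Definition Csub (z w : C) : C := (fst z - fst w, snd z - snd w).

Fixpoint sumsq {I : Type} (x : I -> C) (L : list I) : R :=
  match L with nil => 0 | i :: L' => Cnormsq (x i) + sumsq x L' end.
Definition partial_sums {I : Type} (x : I -> C) (s : R) : Prop :=
  exists L : list I, NoDup L /\ s = sumsq x L.
Definition l2 {I : Type} (x : I -> C) : Prop :=
  exists M, forall s, partial_sums x s -> s <= M.
Definition normsq_is {I : Type} (x : I -> C) (r : R) : Prop :=
  is_lub (partial_sums x) r.
Definition same_norm {I J : Type} (x : I -> C) (y : J -> C) : Prop :=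
  forall r, normsq_is x r <-> normsq_is y r.

(** Inner product on H_a = l^2(nat) (basis e_n): <x,y> = sum_n x_n conj(y_n);
    orthogonality = real and imaginary parts of the series sum to 0. *)
Definition orthogonal_nat (x y : nat -> C) : Prop :=
  infinite_sum (fun n => fst (x n) * fst (y n) + snd (x n) * snd (y n)) 0 /\
  infinite_sum (fun n => snd (x n) * fst (y n) - fst (x n) * snd (y n)) 0.

Definition is_orth_proj (M : (nat -> C) -> Prop) (Q : (nat -> C) -> (nat -> C)) : Prop :=
  forall h, l2 h ->
    l2 (Q h) /\ M (Q h) /\
    forall m, M m -> orthogonal_nat (fun n => Csub (h n) (Q h n)) m.

Section Paths.
Context {K : Type} (le : K -> K -> Prop).

(** Elementary paths: [Up b a] is (b,a) with b <= a; [Dn b a] is overline(b,a) with b >= a.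
    Both have starting point a and ending point b. *)
Inductive elem : Type := Up (b a : K) | Dn (b a : K).

Definition e_start (s : elem) : K := match s with Up _ a | Dn _ a => a end.
Definition e_end (s : elem) : K := match s with Up b _ | Dn b _ => b end.
Definition e_wf (s : elem) : Prop := match s with Up b a => le b a | Dn b a => le a b end.
Definition e_inv (s : elem) : elem := match s with Up b a => Dn a b | Dn b a => Up a b end.

(** A sequence s_n * ... * s_1 is represented by the list [s_n; ...; s_1];
    concatenation is list append; composability: start s_i = end s_{i-1}. *)
Fixpoint chain (l : list elem) : Prop :=
  match l with
  | nil => True
  | s :: l' =>
      e_wf s /\ match l' with nil => True | t :: _ => e_start s = e_end t end /\ chain l'
  end.
Definition wf (l : list elem) : Prop := l <> nil /\ chain l.
Definition ends_at (l : list elem) (c : K) : Prop :=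
  exists s l', l = s :: l' /\ e_end s = c.
Definition starts_at (l : list elem) (c : K) : Prop :=
  exists s l', l = l' ++ [s] /\ e_start s = c.
Definition pinv (l : list elem) : list elem := rev (map e_inv l).

(** Generating relations (a <= b <= c); i_a = (a,a) = overline(a,a). *)
Inductive gen : list elem -> list elem -> Prop :=
| g_up : forall a b c, le a b -> le b c -> gen [Up a b; Up b c] [Up a c]
| g_dn : forall a b c, le a b -> le b c -> gen [Dn c b; Dn b a] [Dn c a]
| g_ud : forall a b, le a b -> gen [Up a b; Dn b a] [Up a a]
| g_du : forall a b, le a b -> gen [Dn b a; Up a b] [Up b b]
| g_triv : forall a, gen [Up a a] [Dn a a].

Inductive pequiv : list elem -> list elem -> Prop :=
| pe_refl : forall l, pequiv l l
| pe_sym : forall l l', pequiv l l' -> pequiv l' l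
| pe_trans : forall l1 l2 l3, pequiv l1 l2 -> pequiv l2 l3 -> pequiv l1 l3
| pe_step : forall l1 r r' l2, gen r r' -> pequiv (l1 ++ r ++ l2) (l1 ++ r' ++ l2).

(** Paths = equivalence classes, represented as predicates on sequences *)
Definition cls (l : list elem) : list elem -> Prop := pequiv l.
Definition in_S (c : K) (P : list elem -> Prop) : Prop :=
  exists l, wf l /\ ends_at l c /\ P = cls l.
Definition prepend (s : elem) (P : list elem -> Prop) : list elem -> Prop :=
  fun l' => exists l, P l /\ pequiv (s :: l) l'.

(** Index set of the orthonormal basis e^c_n (x) e_P of
    H = (+)_c H_c (x) l^2(S_c). *)
Definition Idx : Type := (K * nat * (list elem -> Prop))%type.

(** the Hilbert space H: l^2 vectors supported on {(c,n,P) | P in S_c} *)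
Definition inH (x : Idx -> C) : Prop :=
  l2 x /\ forall c n P, ~ in_S c P -> x (c, n, P) = C0.

(** Operator on l^2(Idx) sending e_i to e_(phi i) for i in D and e_i to 0
    otherwise (phi injective on D), and its adjoint. *)
Definition basis_op (D : Idx -> Prop) (phi : Idx -> Idx) (y : Idx -> C) : Idx -> C :=
  fun j => match excluded_middle_informative (exists i, D i /\ phi i = j) with
           | left H => y (proj1_sig (constructive_indefinite_description _ H))
           | right _ => C0 end.
Definition basis_op_adj (D : Idx -> Prop) (phi : Idx -> Idx) (y : Idx -> C) : Idx -> C :=
  fun i => match excluded_middle_informative (D i) with
           | left _ => y (phi i) | right _ => C0 end.

Context (sigma : K -> K -> nat -> nat).
(** gamma_{ba} e^a_n = e^b_{sigma b a n} *)

Definition dom (a : K) : Idx -> Prop :=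
  fun i => let '(c, _, P) := i in c = a /\ in_S a P.
Definition emb (a b : K) : Idx -> Idx :=
  fun i => let '(_, n, P) := i in (b, sigma b a n, prepend (Dn b a) P).

(** chi_a^b = basis_op (dom a) (emb a b); chi_{overline(b,a)} = chi_a^b,
    chi_{(b,a)} = chi_b^{a*}. *)
Definition chi_e (s : elem) : (Idx -> C) -> (Idx -> C) :=
  match s with
  | Dn b a => basis_op (dom a) (emb a b)
  | Up b a => basis_op_adj (dom b) (emb b a)
  end.
Definition chi_e_adj (s : elem) : (Idx -> C) -> (Idx -> C) :=
  match s with
  | Dn b a => basis_op_adj (dom a) (emb a b)
  | Up b a => basis_op (dom b) (emb b a)
  end.

Definition chi (l : list elem) : (Idx -> C) -> (Idx -> C) :=
  fold_right (fun s f y => chi_e s (f y)) (fun y => y) l.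
Definition chi_adj (l : list elem) : (Idx -> C) -> (Idx -> C) :=
  fold_right (fun s f y => f (chi_e_adj s y)) (fun y => y) l.

Definition tensor (a : K) (h : nat -> C) (P0 : list elem -> Prop) : Idx -> C :=
  fun i => let '(c, n, P) := i in
    match excluded_middle_informative (c = a /\ P = P0) with
    | left _ => h n | right _ => C0 end.

Definition pdomain (l : list elem) (h : nat -> C) : Prop :=
  exists a, starts_at l a /\ l2 h /\
    forall s, in_S a s -> same_norm (chi l (tensor a h s)) h.

End Paths.

From Pilot Require Import Defs.
From Stdlib Require Import Reals List ClassicalEpsilon Classical FunctionalExtensionality
  PropExtensionality Lra Lia FinFun.
Import ListNotations.
Open Scope R_scope.

(** Every elementary operator χ_s sends basis vectors to basis vectors or to 0,
    injectively; such an operator is described by a relation on the index set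
    Idx = K × ℕ × paths ([represents]), and so are compositions and adjoints.
    Hence χ_p moves coordinates along [rel_path p], χ_p^* along its converse, and
    χ_p^* χ_p restricts every vector to the domain of [rel_path p].  Following p
    from an index (a, n, P) with P ∈ S_a, the ℕ-component evolves by a relation
    [nat_path p] built from the maps σ alone, while the path component stays in
    the S_c's thanks to the cancellation relations; so that domain is
    {(a, n, P) | n ∈ ndom p}, independently of P.  Therefore χ_p (h ⊗ e_P) is a
    reindexing of h restricted to [ndom p] and has the same norm, which shows
    that H_p is the space of l² sequences vanishing off [ndom p]; the orthogonal
    projection onto it is the restriction of coordinates, and
    ndom (p^{-1} * p) = ndom p. *)

Lemma Cnormsq_nonneg (z : Defs.C) : 0 <= Cnormsq z.
Proof. unfold Cnormsq. nra. Qed.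

Lemma Cnormsq_pos (z : Defs.C) : z <> C0 -> 0 < Cnormsq z.
Proof.
  destruct z as [u v]. unfold Cnormsq, C0; simpl. intro Hz.
  destruct (Req_dec u 0), (Req_dec v 0); subst; [congruence | nra | nra | nra].
Qed.

Definition restrict {I : Type} (N : I -> Prop) (h : I -> Defs.C) : I -> Defs.C :=
  fun i => if excluded_middle_informative (N i) then h i else C0.

Lemma l2_has_norm {I : Type} (x : I -> Defs.C) : l2 x -> exists r, normsq_is x r.
Proof.
  intros [M HM].
  destruct (completeness (partial_sums x)) as [r Hr].
  - exists M. exact HM.
  - exists 0. exists []. split; [constructor | reflexivity].
  - exists r. exact Hr.
Qed.

Lemma same_norm_trans {I1 I2 I3 : Type} (x : I1 -> Defs.C) (y : I2 -> Defs.C)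
  (z : I3 -> Defs.C) : same_norm x y -> same_norm y z -> same_norm x z.
Proof. intros Hxy Hyz r. rewrite (Hxy r). apply Hyz. Qed.

Section Transport.
Variables (I J : Type) (G : I -> J -> Prop) (x : I -> Defs.C) (y : J -> Defs.C).
Hypothesis G_injective : forall i i' j, G i j -> G i' j -> i = i'.
Hypothesis x_eq_y : forall i j, G i j -> x i = y j.
Hypothesis x_off : forall i, (forall j, ~ G i j) -> x i = C0.

Lemma partial_sum_transport (L : list I) : NoDup L ->
  exists L', NoDup L' /\ sumsq x L = sumsq y L' /\
    forall j, In j L' -> exists i, In i L /\ G i j.
Proof.
  induction L as [|i L IH]; intro HL.
  - exists []. split; [constructor | split; [reflexivity | intros j []]].
  - apply NoDup_cons_iff in HL as [Hi HL].
    destruct (IH HL) as [L' [HL' [Esum Hback]]].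
    destruct (classic (exists j, G i j)) as [[j Hij] | Hnone].
    + exists (j :: L'). split; [|split].
      * constructor; [|exact HL']. intro Hj.
        destruct (Hback j Hj) as [i' [Hi' Hi'j]].
        apply Hi. rewrite (G_injective _ _ _ Hij Hi'j). exact Hi'.
      * simpl. rewrite Esum, (x_eq_y _ _ Hij). reflexivity.
      * intros j' [<- | Hj']; [exists i; simpl; auto |].
        destruct (Hback j' Hj') as [i' [? ?]]. exists i'. simpl. auto.
    + exists L'. split; [exact HL' | split].
      * simpl. rewrite Esum, x_off by (intros j Hj; apply Hnone; eauto).
        unfold Cnormsq, C0; simpl. ring.
      * intros j Hj. destruct (Hback j Hj) as [i' [? ?]]. exists i'. simpl. auto.
Qed.

End Transport.

Lemma same_norm_reindex {I J : Type} (G : I -> J -> Prop) (x : I -> Defs.C) (y : J -> Defs.C) :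
  (forall i j j', G i j -> G i j' -> j = j') ->
  (forall i i' j, G i j -> G i' j -> i = i') ->
  (forall i j, G i j -> x i = y j) ->
  (forall i, (forall j, ~ G i j) -> x i = C0) ->
  (forall j, (forall i, ~ G i j) -> y j = C0) ->
  same_norm x y.
Proof.
  intros G_fun G_inj Exy x_off y_off.
  assert (E : partial_sums x = partial_sums y).
  { apply functional_extensionality. intro s.
    apply propositional_extensionality. split; intros [L [HL ->]].
    - destruct (partial_sum_transport I J G x y G_inj Exy x_off L HL)
        as [L' [HL' [E _]]].
      exists L'. auto.
    - destruct (partial_sum_transport J I (fun j i => G i j) y x
                  (fun j j' i H H' => G_fun i j j' H H')
                  (fun j i H => eq_sym (Exy i j H)) y_off L HL)
        as [L' [HL' [E _]]].
      exists L'. auto. }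
  intro r. unfold normsq_is. rewrite E. tauto.
Qed.

Lemma sumsq_drop_zero (x : nat -> Defs.C) (n0 : nat) (L : list nat) : x n0 = C0 ->
  sumsq x L = sumsq x (filter (fun k => negb (Nat.eqb k n0)) L).
Proof.
  intro Hx. induction L as [|k L IH]; simpl; [reflexivity |].
  destruct (Nat.eqb_spec k n0); simpl.
  - subst. rewrite Hx, IH. unfold Cnormsq, C0; simpl. ring.
  - rewrite IH. reflexivity.
Qed.

Lemma sumsq_restrict_le {I : Type} (N : I -> Prop) (h : I -> Defs.C) (L : list I) :
  sumsq (restrict N h) L <= sumsq h L.
Proof.
  induction L as [|k L IH]; simpl; [lra |].
  unfold restrict at 1. destruct (excluded_middle_informative (N k)); [lra |].
  pose proof (Cnormsq_nonneg (h k)). unfold Cnormsq at 1, C0; simpl. lra.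
Qed.

(** If restricting an l² sequence to [N] keeps its norm, it vanishes off [N]:
    a nonzero coordinate off [N] would make the restriction strictly shorter. *)
Lemma vanishes_off_of_same_norm (N : nat -> Prop) (h : nat -> Defs.C) :
  l2 h -> same_norm (restrict N h) h -> forall n, ~ N n -> h n = C0.
Proof.
  intros Hl Hsame n0 Hn0.
  destruct (classic (h n0 = C0)) as [Hz | Hnz]; [exact Hz | exfalso].
  destruct (l2_has_norm h Hl) as [r Hr].
  assert (HrN := proj2 (Hsame r) Hr).
  assert (Hoff : restrict N h n0 = C0).
  { unfold restrict. destruct (excluded_middle_informative (N n0)); tauto. }
  assert (Hub : is_upper_bound (partial_sums (restrict N h)) (r - Cnormsq (h n0))).
  { intros s [L [HL ->]].
    rewrite (sumsq_drop_zero _ n0 L Hoff).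
    set (L0 := filter (fun k => negb (Nat.eqb k n0)) L).
    assert (Hps : partial_sums h (sumsq h (n0 :: L0))).
    { exists (n0 :: L0). split; [| reflexivity]. constructor.
      - unfold L0. rewrite filter_In. intros [_ Hc].
        rewrite Nat.eqb_refl in Hc. discriminate.
      - apply NoDup_filter. exact HL. }
    pose proof (proj1 Hr _ Hps). pose proof (sumsq_restrict_le N h L0).
    simpl in *. lra. }
  pose proof (proj2 HrN _ Hub). pose proof (Cnormsq_pos _ Hnz). lra.
Qed.

Lemma l2_slice {K : Type} (x : @Idx K -> Defs.C) (a : K) (P : list (@elem K) -> Prop) :
  l2 x -> l2 (fun k => x (a, k, P)).
Proof.
  intros [M HM]. exists M. intros s [L [HL ->]].
  assert (E : sumsq (fun k => x (a, k, P)) L = sumsq x (map (fun k => (a, k, P)) L)).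
  { induction L as [|k L IH]; simpl; [reflexivity |].
    inversion HL; subst. rewrite IH by assumption. reflexivity. }
  rewrite E. apply HM. eexists. split; [| reflexivity].
  apply Injective_map_NoDup; [| exact HL]. intros u v Huv. congruence.
Qed.

Lemma infinite_sum_single (f : nat -> R) (n : nat) :
  (forall k, k <> n -> f k = 0) -> infinite_sum f (f n).
Proof.
  intro Hf.
  assert (Hpart : forall m, sum_f_R0 f m = if Nat.leb n m then f n else 0).
  { induction m as [|m IH]; simpl.
    - destruct n; simpl; [reflexivity | apply Hf; discriminate].
    - rewrite IH. destruct (Nat.leb_spec n m), (Nat.leb_spec n (S m)); try lia.
      + rewrite (Hf (S m)) by lia. ring.
      + replace n with (S m) by lia. ring.
      + rewrite (Hf (S m)) by lia. ring. }
  intros eps Heps. exists n. intros m Hm. rewrite Hpart.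
  destruct (Nat.leb_spec n m); [| lia]. rewrite R_dist_eq. lra.
Qed.

Definition unit_vec (n : nat) : nat -> Defs.C :=
  fun k => if Nat.eqb k n then (1, 0) else C0.

Lemma unit_vec_off (n k : nat) : k <> n -> unit_vec n k = C0.
Proof. intro Hk. unfold unit_vec. destruct (Nat.eqb_spec k n); [contradiction | reflexivity]. Qed.

Lemma unit_vec_l2 (n : nat) : l2 (unit_vec n).
Proof.
  exists 1. intros s [L [HL ->]].
  enough (H : sumsq (unit_vec n) L <= 1 /\ (~ In n L -> sumsq (unit_vec n) L = 0)) by tauto.
  induction L as [|k L IH]; simpl; [split; [lra | reflexivity] |].
  apply NoDup_cons_iff in HL as [Hk HL]. destruct (IH HL) as [Hle Hzero].
  unfold unit_vec at 1 3. destruct (Nat.eqb_spec k n) as [-> | Hkn].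
  - rewrite (Hzero Hk). unfold Cnormsq; simpl. split; [lra | tauto].
  - unfold Cnormsq, C0; simpl. split; [lra |].
    intro Hn. rewrite Hzero by tauto. ring.
Qed.

Lemma orthogonal_unit_vec (d : nat -> Defs.C) (n : nat) :
  orthogonal_nat d (unit_vec n) -> d n = C0.
Proof.
  intros [Hre Him].
  assert (Ere := uniqueness_sum _ _ _ Hre (infinite_sum_single
    (fun k => fst (d k) * fst (unit_vec n k) + snd (d k) * snd (unit_vec n k)) n
    ltac:(intros k Hk; cbv beta; rewrite (unit_vec_off n k Hk); simpl; ring))).
  assert (Eim := uniqueness_sum _ _ _ Him (infinite_sum_single
    (fun k => snd (d k) * fst (unit_vec n k) - fst (d k) * snd (unit_vec n k)) n
    ltac:(intros k Hk; cbv beta; rewrite (unit_vec_off n k Hk); simpl; ring))).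
  unfold unit_vec in Ere, Eim. rewrite Nat.eqb_refl in Ere, Eim. simpl in Ere, Eim.
  destruct (d n) as [u v]. unfold C0. simpl in *. f_equal; lra.
Qed.

Lemma coord_proj_value (N : nat -> Prop) (M : (nat -> Defs.C) -> Prop)
  (Q : (nat -> Defs.C) -> nat -> Defs.C) :
  (forall m, M m <-> l2 m /\ forall n, ~ N n -> m n = C0) ->
  is_orth_proj M Q -> forall h, l2 h -> Q h = restrict N h.
Proof.
  intros HM HQ h Hl. apply functional_extensionality. intro n.
  destruct (HQ h Hl) as [_ [HQM Horth]]. unfold restrict.
  destruct (excluded_middle_informative (N n)) as [Hn | Hn].
  - assert (He : M (unit_vec n)).
    { apply HM. split; [apply unit_vec_l2 | intros k Hk; apply unit_vec_off; congruence]. }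
    pose proof (orthogonal_unit_vec _ n (Horth _ He)) as Hd.
    unfold Csub, C0 in Hd. destruct (h n) as [u v], (Q h n) as [u' v']. simpl in Hd.
    injection Hd. intros. f_equal; lra.
  - apply HM in HQM. apply (proj2 HQM), Hn.
Qed.

Definition represents {T : Type} (A : (T -> Defs.C) -> T -> Defs.C)
  (R : T -> T -> Prop) : Prop :=
  (forall y i j, R i j -> A y j = y i) /\
  (forall y j, (forall i, ~ R i j) -> A y j = C0).

Section Representation.
Context {T : Type}.

(** A represented relation is injective: test [A] on the indicator of [i]. *)
Lemma represents_injective (A : (T -> Defs.C) -> T -> Defs.C) (R : T -> T -> Prop)
  (i i' j : T) : represents A R -> R i j -> R i' j -> i = i'.
Proof.
  intros [Hmove _] Hi Hi'.
  destruct (classic (i = i')) as [E | Hne]; [exact E | exfalso].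
  set (y := fun k : T => if excluded_middle_informative (k = i) then (1, 0) else C0).
  pose proof (eq_trans (eq_sym (Hmove y i j Hi)) (Hmove y i' j Hi')) as E.
  unfold y in E.
  destruct (excluded_middle_informative (i = i)) as [_ | C]; [| congruence].
  destruct (excluded_middle_informative (i' = i)) as [C | _]; [congruence |].
  unfold C0 in E. injection E. apply R1_neq_R0.
Qed.

Lemma represents_ext (A : (T -> Defs.C) -> T -> Defs.C) (R R' : T -> T -> Prop) :
  represents A R -> (forall i j, R i j <-> R' i j) -> represents A R'.
Proof.
  intros [Hmove Hzero] E. split.
  - intros y i j H. apply Hmove, E, H.
  - intros y j H. apply Hzero. intros i Hi. apply (H i), E, Hi.
Qed.

Lemma represents_comp (A B : (T -> Defs.C) -> T -> Defs.C) (RA RB : T -> T -> Prop) :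
  represents A RA -> represents B RB ->
  represents (fun y => A (B y)) (fun i j => exists k, RB i k /\ RA k j).
Proof.
  intros [A1 A2] [B1 B2]. split.
  - intros y i j [k [Hik Hkj]]. rewrite (A1 _ _ _ Hkj). apply B1, Hik.
  - intros y j Hnone. destruct (classic (exists k, RA k j)) as [[k Hk] | Hno].
    + rewrite (A1 _ _ _ Hk). apply B2. intros i Hi. apply (Hnone i). eauto.
    + apply A2. intros k Hk. apply Hno. eauto.
Qed.

Lemma represents_adjoint_comp (A B : (T -> Defs.C) -> T -> Defs.C) (R : T -> T -> Prop) :
  represents A R -> represents B (fun i j => R j i) ->
  forall y, B (A y) = restrict (fun i => exists j, R i j) y.
Proof.
  intros [A1 _] [B1 B2] y. apply functional_extensionality. intro i. unfold restrict.
  destruct (excluded_middle_informative _) as [[j Hij] | Hnone].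
  - rewrite (B1 _ j i Hij). apply A1, Hij.
  - apply B2. intros j Hji. apply Hnone. eauto.
Qed.

End Representation.

Lemma basis_op_represents {K : Type} (D : @Idx K -> Prop) (phi : @Idx K -> @Idx K) :
  (forall i i', D i -> D i' -> phi i = phi i' -> i = i') ->
  represents (basis_op D phi) (fun i j => D i /\ phi i = j).
Proof.
  intro Hinj. split.
  - intros y i j [Hd He]. unfold basis_op.
    destruct (excluded_middle_informative _) as [H | H].
    + destruct (constructive_indefinite_description _ H) as [i' [Hd' He']]. simpl.
      f_equal. apply Hinj; congruence.
    + exfalso. apply H. eauto.
  - intros y j H. unfold basis_op.
    destruct (excluded_middle_informative _) as [[i Hi] | _]; [| reflexivity].
    exfalso. exact (H i Hi).
Qed.

Lemma basis_op_adj_represents {K : Type} (D : @Idx K -> Prop) (phi : @Idx K -> @Idx K) :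
  represents (basis_op_adj D phi) (fun i j => D j /\ phi j = i).
Proof.
  split.
  - intros y i j [Hd He]. unfold basis_op_adj.
    destruct (excluded_middle_informative _); [congruence | contradiction].
  - intros y j H. unfold basis_op_adj.
    destruct (excluded_middle_informative _) as [Hd |]; [| reflexivity].
    exfalso. exact (H (phi j) (conj Hd eq_refl)).
Qed.

Section Paths.
Context {K : Type} (le : K -> K -> Prop) (le_refl : forall a, le a a).

Lemma pequiv_cons (s : elem) (l l' : list elem) :
  pequiv le l l' -> pequiv le (s :: l) (s :: l').
Proof.
  induction 1.
  - apply pe_refl.
  - now apply pe_sym.
  - eapply pe_trans; eauto.
  - exact (pe_step le (s :: l1) r r' l2 H).
Qed.

Lemma cls_eq (l l' : list elem) : pequiv le l l' -> cls le l = cls le l'.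
Proof.
  intro H. apply functional_extensionality. intro m.
  apply propositional_extensionality. unfold cls. split; intro Hm.
  - eapply pe_trans; [apply pe_sym, H | exact Hm].
  - eapply pe_trans; eauto.
Qed.

Lemma prepend_cls (s : elem) (l : list elem) : prepend le s (cls le l) = cls le (s :: l).
Proof.
  apply functional_extensionality. intro m.
  apply propositional_extensionality. unfold prepend, cls. split.
  - intros [l0 [H1 H2]]. eapply pe_trans; [apply pequiv_cons, H1 | exact H2].
  - intro H. exists l. split; [apply pe_refl | exact H].
Qed.

Lemma prepend_in_S (c : K) (s : elem) (P : list elem -> Prop) :
  e_wf le s -> e_start s = c -> in_S le c P -> in_S le (e_end s) (prepend le s P).
Proof.
  intros Hs Hc [l [[_ Hch] [[t [l' [-> Ht]]] ->]]].
  rewrite prepend_cls. exists (s :: t :: l'). split; [| split].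
  - split; [discriminate |]. split; [exact Hs | split; [congruence | exact Hch]].
  - exists s, (t :: l'). auto.
  - reflexivity.
Qed.

Lemma prepend_trivial (a : K) (P : list elem -> Prop) :
  in_S le a P -> prepend le (Up a a) P = P.
Proof.
  intros [l [[_ Hch] [[t [l' [-> Ht]]] ->]]].
  rewrite prepend_cls. apply cls_eq.
  simpl in Hch. destruct Hch as [Hwf _].
  destruct t as [b x | b x]; simpl in Ht, Hwf; subst a.
  - exact (pe_step le [] _ _ l' (g_up le b b x (le_refl b) Hwf)).
  - eapply pe_trans.
    + exact (pe_step le [] _ _ (Dn b x :: l') (g_triv le b)).
    + exact (pe_step le [] _ _ l' (g_dn le x b b Hwf (le_refl b))).
Qed.

(** The relations (a,b)*overline(b,a) ~ i_a and overline(b,a)*(a,b) ~ i_b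
    make prepending (b,a) and overline(a,b) mutually inverse on path classes. *)
Lemma cancel_dn_up (a b : K) (P : list elem -> Prop) : le b a -> in_S le a P ->
  prepend le (Dn a b) (prepend le (Up b a) P) = P.
Proof.
  intros Hba HP. rewrite <- (prepend_trivial a P HP) at 2.
  destruct HP as [l [_ [_ ->]]]. rewrite !prepend_cls. apply cls_eq.
  exact (pe_step le [] _ _ l (g_du le b a Hba)).
Qed.

Lemma cancel_up_dn (a b : K) (P : list elem -> Prop) : le a b -> in_S le a P ->
  prepend le (Up a b) (prepend le (Dn b a) P) = P.
Proof.
  intros Hab HP. rewrite <- (prepend_trivial a P HP) at 2.
  destruct HP as [l [_ [_ ->]]]. rewrite !prepend_cls. apply cls_eq.
  exact (pe_step le [] _ _ l (g_ud le a b Hab)).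
Qed.

Lemma trivial_in_S (a : K) : in_S le a (cls le [Up a a]).
Proof.
  exists [Up a a]. split; [split; [discriminate | simpl; auto] | split].
  - exists (Up a a), []. auto.
  - reflexivity.
Qed.

Inductive walk : K -> K -> list (@elem K) -> Prop :=
| walk_nil c : walk c c []
| walk_cons c0 s l : walk c0 (e_start s) l -> e_wf le s -> walk c0 (e_end s) (s :: l).

Lemma walk_of_wf (l : list elem) (c0 c1 : K) :
  wf le l -> starts_at l c0 -> ends_at l c1 -> walk c0 c1 l.
Proof.
  intros [_ Hch] Hst [s [l' [-> <-]]]. revert s Hch Hst.
  induction l' as [|t l' IH]; intros s Hch [s0 [l1 [E Hs0]]].
  - destruct l1 as [|x [|y l1]]; try discriminate. injection E as <-.
    simpl in Hch. subst. apply walk_cons; [apply walk_nil | tauto].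
  - destruct l1 as [|x l1]; [destruct l'; discriminate |].
    injection E as <- E. simpl in Hch. destruct Hch as [Hwf [Hjoin Hch]].
    apply walk_cons; [| exact Hwf]. rewrite Hjoin.
    apply IH; [exact Hch | exists s0, l1; auto].
Qed.

Lemma walk_starts_at (c0 c1 : K) (l : list elem) :
  walk c0 c1 l -> l <> [] -> starts_at l c0.
Proof.
  induction 1 as [c | c0 s l W IH Hs]; intro Hne; [congruence |].
  destruct l as [|t l].
  - inversion W. exists s, []. auto.
  - destruct (IH ltac:(discriminate)) as [u [l1 [E Hu]]].
    exists u, (s :: l1). rewrite E. auto.
Qed.

Lemma walk_app (c0 c1 c2 : K) (l1 l2 : list elem) :
  walk c1 c2 l1 -> walk c0 c1 l2 -> walk c0 c2 (l1 ++ l2).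
Proof. induction 1; intro W; simpl; [exact W | apply walk_cons; auto]. Qed.

Lemma walk_pinv (c0 c1 : K) (l : list elem) : walk c0 c1 l -> walk c1 c0 (pinv l).
Proof.
  induction 1 as [c | c0 s l W IH Hs]; [apply walk_nil |].
  unfold pinv. simpl. fold (pinv l).
  apply (walk_app _ (e_start s)); [exact IH |].
  replace (e_start s) with (e_end (e_inv s)) by (destruct s; reflexivity).
  apply walk_cons; [destruct s; apply walk_nil | destruct s; exact Hs].
Qed.

Context (sigma : K -> K -> nat -> nat)
  (sigma_inj : forall a b, le a b -> forall n m, sigma b a n = sigma b a m -> n = m).

Definition rel_elem (s : @elem K) : @Idx K -> @Idx K -> Prop :=
  match s with
  | Dn b a => fun i j => dom le a i /\ emb le sigma a b i = j
  | Up b a => fun i j => dom le b j /\ emb le sigma b a j = i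
  end.

Fixpoint rel_path (l : list (@elem K)) : @Idx K -> @Idx K -> Prop :=
  match l with
  | [] => fun i j => i = j
  | s :: l' => fun i j => exists k, rel_path l' i k /\ rel_elem s k j
  end.

(** χ_a^b is injective on basis vectors: σ_ba is injective and prepending
    overline(b,a) is undone by prepending (a,b). *)
Lemma emb_injective (a b : K) (i i' : @Idx K) : le a b -> dom le a i -> dom le a i' ->
  emb le sigma a b i = emb le sigma a b i' -> i = i'.
Proof.
  destruct i as [[c n] P], i' as [[c' n'] P']. simpl.
  intros Hab [-> HP] [-> HP'] E. injection E as En EP.
  rewrite (sigma_inj _ _ Hab _ _ En).
  rewrite <- (cancel_up_dn a b P Hab HP), EP, (cancel_up_dn a b P' Hab HP').
  reflexivity.
Qed.

Lemma chi_e_represents (s : elem) : e_wf le s -> represents (chi_e le sigma s) (rel_elem s).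
Proof.
  destruct s as [b a | b a]; simpl; intro Hs.
  - apply basis_op_adj_represents.
  - apply basis_op_represents. intros; eapply emb_injective; eauto.
Qed.

Lemma chi_e_adj_represents (s : elem) : e_wf le s ->
  represents (chi_e_adj le sigma s) (fun i j => rel_elem s j i).
Proof.
  destruct s as [b a | b a]; simpl; intro Hs.
  - apply basis_op_represents. intros; eapply emb_injective; eauto.
  - apply basis_op_adj_represents.
Qed.

Lemma chi_represents (c0 c1 : K) (l : list elem) :
  walk c0 c1 l -> represents (chi le sigma l) (rel_path l).
Proof.
  induction 1 as [c | c0 s l W IH Hs].
  - split; simpl; [intros y i j ->; reflexivity | intros y j H; exfalso; exact (H j eq_refl)].
  - exact (represents_comp _ _ _ _ (chi_e_represents s Hs) IH).
Qed.

Lemma chi_adj_represents (c0 c1 : K) (l : list elem) :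
  walk c0 c1 l -> represents (chi_adj le sigma l) (fun i j => rel_path l j i).
Proof.
  induction 1 as [c | c0 s l W IH Hs].
  - split; simpl; [intros y i j ->; reflexivity | intros y j H; exfalso; exact (H j eq_refl)].
  - eapply represents_ext; [exact (represents_comp _ _ _ _ IH (chi_e_adj_represents s Hs)) |].
    simpl. intros i j. split; intros [k [H1 H2]]; eauto.
Qed.

Lemma chi_adj_chi (c0 c1 : K) (l : list elem) (x : @Idx K -> Defs.C) :
  walk c0 c1 l ->
  chi_adj le sigma l (chi le sigma l x) = restrict (fun i => exists j, rel_path l i j) x.
Proof.
  intro W. exact (represents_adjoint_comp _ _ _ (chi_represents _ _ _ W)
                    (chi_adj_represents _ _ _ W) x).
Qed.

Definition nat_elem (s : @elem K) : nat -> nat -> Prop :=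
  match s with
  | Up b a => fun m n' => m = sigma a b n'
  | Dn b a => fun m n' => n' = sigma b a m
  end.

Fixpoint nat_path (l : list (@elem K)) : nat -> nat -> Prop :=
  match l with
  | [] => fun n n' => n = n'
  | s :: l' => fun n n' => exists m, nat_path l' n m /\ nat_elem s m n'
  end.

Definition ndom (l : list (@elem K)) (n : nat) : Prop := exists n', nat_path l n n'.

Lemma rel_elem_fwd (s : elem) (P : list elem -> Prop) (n n' : nat) :
  e_wf le s -> in_S le (e_start s) P -> nat_elem s n n' ->
  exists P', in_S le (e_end s) P' /\ rel_elem s (e_start s, n, P) (e_end s, n', P').
Proof.
  destruct s as [b a | b a]; simpl; intros Hs HP Hn.
  - exists (prepend le (Up b a) P).
    assert (HP' := prepend_in_S a (Up b a) P Hs eq_refl HP).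
    split; [exact HP' |]. split; [split; [reflexivity | exact HP'] |].
    simpl. rewrite cancel_dn_up by assumption. congruence.
  - exists (prepend le (Dn b a) P). split.
    + exact (prepend_in_S a (Dn b a) P Hs eq_refl HP).
    + split; [split; [reflexivity | exact HP] |]. simpl. congruence.
Qed.

Lemma rel_elem_bwd (s : elem) (c c' : K) (n n' : nat) (P P' : list elem -> Prop) :
  e_wf le s -> rel_elem s (c, n, P) (c', n', P') ->
  c = e_start s /\ c' = e_end s /\ nat_elem s n n' /\ in_S le (e_end s) P'.
Proof.
  destruct s as [b a | b a]; simpl; intros Hs.
  - intros [[-> HP'] E]. injection E. intros. subst. auto.
  - intros [[-> HP] E]. injection E as <- <- <-.
    repeat split. exact (prepend_in_S a (Dn b a) P Hs eq_refl HP).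
Qed.

Lemma walk_source (c0 c1 : K) (l : list elem) (c : K) (n : nat) (P : list elem -> Prop)
  (j : @Idx K) :
  walk c0 c1 l -> l <> [] -> rel_path l (c, n, P) j -> c = c0.
Proof.
  intro W. revert c n P j.
  induction W as [c' | c0 s l W IH Hs]; intros c n P j Hne Hrel; [congruence |].
  destruct Hrel as [[[ck nk] Pk] [H1 H2]].
  destruct l as [|t l'].
  - simpl in H1. rewrite <- H1 in H2. destruct j as [[cj nj] Pj].
    destruct (rel_elem_bwd s _ _ _ _ _ _ Hs H2) as [-> _]. inversion W. reflexivity.
  - exact (IH _ _ _ _ ltac:(discriminate) H1).
Qed.

Lemma walk_fwd (c0 c1 : K) (l : list elem) (P : list elem -> Prop) (n n' : nat) :
  walk c0 c1 l -> in_S le c0 P -> nat_path l n n' ->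
  exists P', in_S le c1 P' /\ rel_path l (c0, n, P) (c1, n', P').
Proof.
  intro W. revert n'.
  induction W as [c | c0 s l W IH Hs]; intros n' HP Hn.
  - simpl in Hn. subst. exists P. simpl. auto.
  - destruct Hn as [m [H1 H2]].
    destruct (IH m HP H1) as [Pm [HPm Hm]].
    destruct (rel_elem_fwd s Pm m n' Hs HPm H2) as [P' [HP' Hrel]].
    exists P'. split; [exact HP' | exists (e_start s, m, Pm); auto].
Qed.

Lemma walk_bwd (c0 c1 : K) (l : list elem) (P : list elem -> Prop) (n : nat)
  (c : K) (n' : nat) (P' : list elem -> Prop) :
  walk c0 c1 l -> in_S le c0 P -> rel_path l (c0, n, P) (c, n', P') -> nat_path l n n'.
Proof.
  intro W. revert c n' P'.
  induction W as [c' | c0 s l W IH Hs]; intros c n' P' HP Hrel.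
  - simpl in Hrel. injection Hrel. intros. subst. reflexivity.
  - destruct Hrel as [[[ck nk] Pk] [H1 H2]].
    destruct (rel_elem_bwd s _ _ _ _ _ _ Hs H2) as [_ [_ [Hn _]]].
    exists nk. split; [exact (IH _ _ _ HP H1) | exact Hn].
Qed.

Lemma rel_path_domain (a c1 : K) (l : list elem) (P : list elem -> Prop) (c : K) (n : nat) :
  walk a c1 l -> l <> [] -> in_S le a P ->
  (exists j, rel_path l (c, n, P) j) <-> c = a /\ ndom l n.
Proof.
  intros W Hne HP. split.
  - intros [j Hj]. assert (Hc := walk_source _ _ _ _ _ _ _ W Hne Hj). subst c.
    destruct j as [[cj nj] Pj]. split; [reflexivity |].
    exists nj. exact (walk_bwd _ _ _ _ _ _ _ _ W HP Hj).
  - intros [-> [n' Hn]]. destruct (walk_fwd _ _ _ _ _ _ W HP Hn) as [P' [_ H]].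
    eexists. exact H.
Qed.

Lemma nat_path_app (l1 l2 : list elem) (n n' : nat) :
  nat_path (l1 ++ l2) n n' <-> exists m, nat_path l2 n m /\ nat_path l1 m n'.
Proof.
  revert n'. induction l1 as [|s l1 IH]; intro n'; simpl.
  - split; [intro H; exists n'; auto | intros [m [H1 <-]]; exact H1].
  - split.
    + intros [m [H1 H2]]. apply IH in H1 as [k [H3 H4]]. eauto.
    + intros [k [H1 [m [H2 H3]]]]. exists m. split; [apply IH; eauto | exact H3].
Qed.

Lemma nat_path_pinv (l : list elem) (n n' : nat) : nat_path (pinv l) n n' <-> nat_path l n' n.
Proof.
  revert n n'. induction l as [|s l IH]; intros n n'; [simpl; split; auto |].
  unfold pinv. simpl. fold (pinv l). rewrite nat_path_app. simpl.
  assert (Hinv : forall m, nat_elem (e_inv s) n m <-> nat_elem s m n)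
    by (destruct s; simpl; split; auto).
  split.
  - intros [m [[m0 [<- H1]] H2]]. apply IH in H2. exists m. split; [exact H2 | apply Hinv, H1].
  - intros [m [H1 H2]]. exists m. split; [exists n; split; [reflexivity | apply Hinv, H2] |].
    apply IH, H1.
Qed.

(** p^{-1} * p has the same ℕ-domain as p: go along p and come back. *)
Lemma ndom_pinv_app (l : list elem) (n : nat) : ndom (pinv l ++ l) n <-> ndom l n.
Proof.
  unfold ndom. split.
  - intros [n' Hn]. apply nat_path_app in Hn as [m [H1 _]]. eauto.
  - intros [m Hm]. exists n. apply nat_path_app. exists m. split; [exact Hm |].
    apply nat_path_pinv, Hm.
Qed.

Lemma chi_tensor_norm (a c1 : K) (l : list elem) (h : nat -> Defs.C) (s : list elem -> Prop) :
  walk a c1 l -> l <> [] -> in_S le a s ->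
  same_norm (restrict (ndom l) h) (chi le sigma l (tensor a h s)).
Proof.
  intros W Hne Hs.
  destruct (chi_represents _ _ _ W) as [Hmove Hzero].
  assert (Hdom : forall n, (exists j, rel_path l (a, n, s) j) <-> ndom l n).
  { intro n. rewrite (rel_path_domain _ _ _ _ a n W Hne Hs). tauto. }
  apply (same_norm_reindex (fun n j => rel_path l (a, n, s) j)).
  - intros n j j' H H'.
    exact (represents_injective _ _ _ _ _ (chi_adj_represents _ _ _ W) H H').
  - intros n n' j H H'.
    pose proof (represents_injective _ _ _ _ _ (chi_represents _ _ _ W) H H'). congruence.
  - intros n j H. rewrite (Hmove _ _ _ H). unfold restrict, tensor.
    destruct (excluded_middle_informative (ndom l n)) as [_ | C]; [| exfalso; apply C, Hdom; eauto].
    destruct (excluded_middle_informative _) as [_ | C]; [reflexivity | tauto].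
  - intros n Hn. unfold restrict.
    destruct (excluded_middle_informative (ndom l n)) as [Hd | _]; [| reflexivity].
    exfalso. apply Hdom in Hd as [j Hj]. exact (Hn j Hj).
  - intros j Hj. destruct (classic (exists i, rel_path l i j)) as [[[[c m] P] Hi] | Hno].
    + rewrite (Hmove _ _ _ Hi). unfold tensor.
      destruct (excluded_middle_informative _) as [[-> ->] | _]; [| reflexivity].
      exfalso. exact (Hj m Hi).
    + apply Hzero. intros i Hi. apply Hno. eauto.
Qed.

Lemma pdomain_char (a c1 : K) (l : list elem) (h : nat -> Defs.C) :
  walk a c1 l -> l <> [] ->
  (pdomain le sigma l h <-> l2 h /\ forall n, ~ ndom l n -> h n = C0).
Proof.
  intros W Hne. assert (Hst := walk_starts_at _ _ _ W Hne). split.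
  - intros [a' [Hst' [Hl Hnorm]]].
    destruct Hst as [u [l1 [E Hu]]], Hst' as [u' [l1' [E' Hu']]].
    rewrite E in E'. apply app_inj_tail in E' as [_ <-]. rewrite Hu' in Hu. subst a'.
    split; [exact Hl |].
    apply vanishes_off_of_same_norm; [exact Hl |].
    exact (same_norm_trans _ _ _ (chi_tensor_norm _ _ _ h _ W Hne (trivial_in_S a))
             (Hnorm _ (trivial_in_S a))).
  - intros [Hl Hvanish]. exists a. split; [exact Hst | split; [exact Hl |]].
    intros s Hs. intro r. rewrite <- (chi_tensor_norm _ _ _ h _ W Hne Hs r).
    replace (restrict (ndom l) h) with h; [tauto |].
    apply functional_extensionality. intro n. unfold restrict.
    destruct (excluded_middle_informative _) as [_ | Hn]; [reflexivity | exact (Hvanish n Hn)].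
Qed.

(** On a vector [x] of H, χ_l^* χ_l keeps exactly the coordinates (a,n,P) with
    n ∈ ndom l (P ∉ S_a carries no coordinate of [x]). *)
Lemma chi_adj_chi_value (a c1 : K) (l : list elem) (x : @Idx K -> Defs.C) (c : K) (n : nat)
  (P : list elem -> Prop) :
  walk a c1 l -> l <> [] -> inH le x ->
  chi_adj le sigma l (chi le sigma l x) (c, n, P) =
    match excluded_middle_informative (c = a) with
    | left _ => restrict (ndom l) (fun k => x (a, k, P)) n
    | right _ => C0
    end.
Proof.
  intros W Hne [_ Hx0]. rewrite (chi_adj_chi _ _ _ x W). unfold restrict.
  destruct (classic (in_S le a P)) as [HP | HP].
  - assert (Hdom := rel_path_domain _ _ _ _ c n W Hne HP).
    destruct (excluded_middle_informative (c = a)) as [-> | Hc];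
      destruct (excluded_middle_informative (exists j, _)) as [Hj | Hj];
      destruct (excluded_middle_informative (ndom l n)) as [Hn | Hn]; tauto.
  - destruct (excluded_middle_informative (exists j, _)) as [[j Hj] | _].
    + rewrite (walk_source _ _ _ _ _ _ _ W Hne Hj) in *.
      destruct (excluded_middle_informative (a = a)) as [_ | C]; [| congruence].
      rewrite (Hx0 a n P HP). destruct (excluded_middle_informative _); reflexivity.
    + destruct (excluded_middle_informative (c = a)) as [-> | _]; [| reflexivity].
      rewrite (Hx0 a n P HP). destruct (excluded_middle_informative _); reflexivity.
Qed.

End Paths.

Theorem corollary3p5 (K : Type) (le : K -> K -> Prop)
  (le_refl : forall a, le a a)
  (le_anti : forall a b, le a b -> le b a -> a = b)
  (le_trans : forall a b c, le a b -> le b c -> le a c)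
  (sigma : K -> K -> nat -> nat)
  (sigma_inj : forall a b, le a b -> forall n m, sigma b a n = sigma b a m -> n = m)
  (sigma_id : forall a n, sigma a a n = n)
  (sigma_comp : forall a b c, le a b -> le b c ->
     forall n, sigma c a n = sigma c b (sigma b a n))
  (a : K) (p : list (@elem K)) (Hwf : wf le p)
  (Hstart : starts_at p a) (Hend : ends_at p a) :
  (forall h, pdomain le sigma (pinv p ++ p) h <-> pdomain le sigma p h) /\
  (forall Q, is_orth_proj (pdomain le sigma p) Q ->
   forall x, inH le x -> forall c n P,
     chi_adj le sigma p (chi le sigma p x) (c, n, P) =
       match excluded_middle_informative (c = a) with
       | left _ => Q (fun k => x (a, k, P)) n
       | right _ => C0
       end).
Proof.
  assert (W : walk le a a p) by exact (walk_of_wf le p a a Hwf Hstart Hend).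
  assert (Hne : p <> []) by apply Hwf.
  assert (W2 : walk le a a (pinv p ++ p)) by exact (walk_app le _ a _ _ _ (walk_pinv le _ _ _ W) W).
  assert (Hne2 : pinv p ++ p <> []) by (intro E; apply app_eq_nil in E; tauto).
  assert (Hchar := fun h => pdomain_char le le_refl sigma sigma_inj a a p h W Hne).
  split.
  - intro h. rewrite (pdomain_char le le_refl sigma sigma_inj a a _ h W2 Hne2), Hchar.
    setoid_rewrite (ndom_pinv_app sigma p). tauto.
  - intros Q HQ x Hx c n P.
    rewrite (chi_adj_chi_value le le_refl sigma sigma_inj a a p x c n P W Hne Hx).
    destruct (excluded_middle_informative (c = a)); [| reflexivity].
    rewrite (coord_proj_value _ _ Q Hchar HQ); [reflexivity |].
    exact (l2_slice x a P (proj1 Hx)).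
Qed.
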